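(* Let $G=(V,E)$ be a graph and $X \subseteq V$ a set of vertices such that every vertex of $V \setminus X$ has degree at most $2$ in $G$. For all positive integers $\ell, p$: if there exists a set $S \subseteq V$ with $|S| \le p$ such that every connected component of $G - S$ has at most $\ell$ vertices, then there exists such a set $S$ (with $|S| \le p$ and all components of $G-S$ of size at most $\ell$) which additionally satisfies: for every cycle $C$ of $G$ with $C \cap X \neq \emptyset$, either $C \cap S = \emptyset$ or $C \cap X \cap S \neq \emptyset$.
   Context: Graphs are finite, simple and undirected; a cycle $C$ is identified with its vertex set when intersecting with vertex sets. *)

From mathcomp Require Import all_boot.
Set Implicit Arguments. Unset Strict Implicit. Unset Printing Implicit Defensive.

(* A finite simple graph: vertex type T : finType, symmetric irreflexive e. *)

Definition deg (T : finType) (e : rel T) (v : T) : nat := #|[set w | e v w]|.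

Definition del_rel (T : finType) (e : rel T) (S : {set T}) : rel T :=
  [rel x y | [&& e x y, x \notin S & y \notin S]].

(* vertex set of the connected component of v in G - S (v assumed outside S) *)
Definition comp_of (T : finType) (e : rel T) (S : {set T}) (v : T) : {set T} :=
  [set w | connect (del_rel e S) v w].

Definition comps_bounded (T : finType) (e : rel T) (S : {set T}) (l : nat) : Prop :=
  forall v, v \notin S -> #|comp_of e S v| <= l.

(* c is (a cyclic listing of the vertices of) a cycle of G:
   at least 3 distinct vertices, consecutive ones adjacent, last adjacent to first *)
Definition is_cycle (T : finType) (e : rel T) (c : seq T) : Prop :=
  [/\ 3 <= size c, uniq c & cycle e c].

Definition cset (T : finType) (c : seq T) : {set T} := [set x in c].

From mathcomp Require Import all_boot.
Set Implicit Arguments. Unset Strict Implicit. Unset Printing Implicit Defensive.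

(* Among the admissible sets S choose one maximising |S ∩ X|, and suppose a
   cycle C meets X and S but not X ∩ S.  Rotate S forward along C by the least
   r > 0 that carries some vertex of S ∩ C onto X.  A vertex of C outside X has
   degree 2, so its neighbours are its two neighbours on C; and for a vertex z
   of C ∩ X outside the rotated set, the r vertices preceding z on C avoid S by
   minimality of r.  Hence rotating back maps each component of the new graph
   injectively into a component of G - S, so components stay small, while the
   rotated set meets X in strictly more vertices. *)

Lemma iter_can (T : Type) (f g : T -> T) n : cancel f g -> cancel (iter n f) (iter n g).
Proof. by move=> fK; elim: n => // n IHn x; rewrite [iter n.+1 f x]iterS iterSr fK. Qed.

Lemma iter_commute (T : Type) (f g : T -> T) n :
  (forall x, g (f x) = f (g x)) -> forall x, iter n g (f x) = f (iter n g x).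
Proof. by move=> gf x; elim: n => //= n ->; rewrite gf. Qed.

Lemma connect_homo (T : finType) (e e' : rel T) (h : T -> T) :
  (forall x y, e x y -> connect e' (h x) (h y)) ->
  forall x y, connect e x y -> connect e' (h x) (h y).
Proof.
move=> he x _ /connectP[p + ->]; elim: p x => [|y p IHp] x /=; first by rewrite connect0.
by case/andP=> /he xy /IHp; apply: connect_trans.
Qed.

Section CycleNextPrev.
Variables (T : finType) (c : seq T).

Lemma next_notin x : x \notin c -> next c x = x.
Proof. by rewrite next_nth => /negbTE ->. Qed.

Lemma prev_notin x : x \notin c -> prev c x = x.
Proof. by rewrite prev_nth => /negbTE ->. Qed.

Lemma mem_iter_next n x : (iter n (next c) x \in c) = (x \in c).
Proof. by elim: n => //= n IHn; rewrite mem_next. Qed.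

Lemma mem_iter_prev n x : (iter n (prev c) x \in c) = (x \in c).
Proof. by elim: n => //= n IHn; rewrite mem_prev. Qed.

Lemma next_neq_prev x : 3 <= size c -> uniq c -> x \in c -> next c x != prev c x.
Proof.
move=> c3 Uc xc; apply/eqP => nx_px.
have x2x : iter 2 (next c) x = x by rewrite /= nx_px next_prev.
have := findex_iter (f := next c) (x := x) (i := 2).
by rewrite (order_cycle (cycle_next Uc) Uc xc) x2x findex0 => /(_ c3).
Qed.

End CycleNextPrev.

Lemma del_rel_sym (T : finType) (e : rel T) (S : {set T}) :
  symmetric e -> symmetric (del_rel e S).
Proof.
by move=> e_sym x y; rewrite /del_rel /= e_sym; case: (x \in S); rewrite ?andbF ?andbT.
Qed.

Lemma comps_boundedP (T : finType) (e : rel T) (S : {set T}) (l : nat) :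
  reflect (comps_bounded e S l) [forall (v | v \notin S), #|comp_of e S v| <= l].
Proof. exact: forall_inP. Qed.

Lemma comps_bounded_imset (T : finType) (e : rel T) (S : {set T}) (l : nat)
    (s s' : T -> T) :
  cancel s s' -> cancel s' s ->
  (forall x y, del_rel e (s @: S) x y -> connect (del_rel e S) (s' x) (s' y)) ->
  comps_bounded e S l -> comps_bounded e (s @: S) l.
Proof.
move=> sK s'K edge_back bS v vS.
have s'vS : s' v \notin S by apply: contra vS => ?; rewrite -[v]s'K imset_f.
apply: leq_trans (bS _ s'vS); rewrite -(card_imset (comp_of e S (s' v)) (can_inj sK)).
apply/subset_leq_card/subsetP => w; rewrite inE => vw.
by rewrite -[w]s'K; apply: imset_f; rewrite inE; apply: connect_homo vw.
Qed.

Lemma adj_cycle_deg2 (T : finType) (e : rel T) (c : seq T) x y :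
  symmetric e -> 3 <= size c -> uniq c -> cycle e c ->
  x \in c -> deg e x <= 2 -> e x y -> (y == next c x) || (y == prev c x).
Proof.
move=> e_sym c3 Uc Cc xc dx exy.
have sub : [set next c x; prev c x] \subset [set w | e x w].
  apply/subsetP => w; rewrite !inE => /orP[] /eqP ->; first exact: next_cycle.
  by rewrite e_sym; exact: prev_cycle.
have : [set next c x; prev c x] = [set w | e x w].
  by apply/eqP; rewrite eqEcard sub cards2 next_neq_prev.
by move/setP/(_ y); rewrite !inE exy.
Qed.

Section RotateAlongCycle.
Variables (T : finType) (e : rel T) (X S : {set T}) (c : seq T).
Hypotheses (e_sym : symmetric e) (deg_notX : forall v, v \notin X -> deg e v <= 2).
Hypotheses (c3 : 3 <= size c) (Uc : uniq c) (Cc : cycle e c).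
Hypotheses (cS : cset c :&: S != set0) (cX : cset c :&: X != set0)
  (cXS : cset c :&: X :&: S = set0).

Lemma notin_S_cycle_X z : z \in c -> z \in X -> z \notin S.
Proof.
move=> zc zX; apply/negP => zS.
by have := in_set0 z; rewrite -cXS !inE zc zX zS.
Qed.

Definition hits_X t := (0 < t) && [exists y in cset c :&: S, iter t (next c) y \in X].

Lemma exists_hits_X : exists t, hits_X t.
Proof.
have [y0] := set0Pn _ cS; rewrite !inE => /andP[y0c y0S].
have [x0] := set0Pn _ cX; rewrite !inE => /andP[x0c x0X].
have y0x0 : fconnect (next c) y0 x0 by rewrite (fconnect_cycle (cycle_next Uc) y0c).
exists (findex (next c) y0 x0); apply/andP; split.
  rewrite lt0n; apply: contraTneq y0S => f0.
  by move: (iter_findex y0x0); rewrite f0 /= => ->; apply: notin_S_cycle_X.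
by apply/exists_inP; exists y0; rewrite ?iter_findex // !inE y0c.
Qed.

Let shift := ex_minn exists_hits_X.

Lemma hits_X_shift : hits_X shift.
Proof. by rewrite /shift; case: ex_minnP. Qed.

Lemma shift_min t : hits_X t -> shift <= t.
Proof. by rewrite /shift; case: ex_minnP => r _; apply. Qed.

Local Notation rho := (iter shift (next c)).
Local Notation rho' := (iter shift (prev c)).

Lemma rhoK : cancel rho rho'. Proof. exact/iter_can/prev_next. Qed.
Lemma rhoK' : cancel rho' rho. Proof. exact/iter_can/next_prev. Qed.

Lemma rho'_notin_S z : z \notin rho @: S -> rho' z \notin S.
Proof. by apply: contra => zS; rewrite -[z]rhoK' imset_f. Qed.

Lemma iter_prev_notin_S z k : z \in c -> z \in X -> z \notin rho @: S ->
  k <= shift -> iter k (prev c) z \notin S.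
Proof.
(* k = 0 by [cXS], 0 < k < shift by minimality of [shift], k = shift as z is not rotated. *)
move=> zc zX zS'; case: k => [_|k kr]; first exact: notin_S_cycle_X.
apply/negP => kzS.
have hk : hits_X k.+1.
  apply/andP; split=> //; apply/exists_inP; exists (iter k.+1 (prev c) z).
    by rewrite !inE mem_iter_prev zc.
  by rewrite (iter_can _ (next_prev Uc)).
have kE : k.+1 = shift by apply/eqP; rewrite eqn_leq kr shift_min.
by move: zS'; rewrite -[z]rhoK' -kE imset_f.
Qed.

Lemma notin_S_unrotated z : z \notin rho @: S -> (z \in c) ==> (z \in X) -> z \notin S.
Proof.
move=> zS'; case: (boolP (z \in c)) => [zc|zc _]; first exact: notin_S_cycle_X.
by move: (rho'_notin_S zS'); rewrite iter_fix ?prev_notin.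
Qed.

Lemma connect_rho' z : z \notin rho @: S -> (z \in c) ==> (z \in X) ->
  connect (del_rel e S) (rho' z) z.
Proof.
move=> zS'; case: (boolP (z \in c)) => [zc /= zX|zc _]; last first.
  by rewrite iter_fix ?prev_notin ?connect0.
suff : forall k, k <= shift -> connect (del_rel e S) (iter k (prev c) z) z by apply.
elim=> [|k IHk] kr; first exact: connect0.
apply: connect_trans (IHk (ltnW kr)); apply: connect1.
have kzS := iter_prev_notin_S zc zX zS' kr.
have kzS' := iter_prev_notin_S zc zX zS' (ltnW kr).
by rewrite /del_rel /= prev_cycle ?mem_iter_prev ?kzS.
Qed.

Lemma del_rel_rho'_cycle x y : x \in c -> x \notin X ->
  del_rel e (rho @: S) x y -> del_rel e S (rho' x) (rho' y).
Proof.
move=> xc xX /and3P[exy xS' yS'].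
have := adj_cycle_deg2 e_sym c3 Uc Cc xc (deg_notX xX) exy.
rewrite /del_rel /= !rho'_notin_S ?andbT //.
have rho'xc : rho' x \in c by rewrite mem_iter_prev.
case/orP=> /eqP ->.
  by rewrite iter_commute ?next_cycle // => z; rewrite next_prev ?prev_next.
by rewrite -iterSr /= e_sym prev_cycle.
Qed.

Lemma del_rel_rho' x y :
  del_rel e (rho @: S) x y -> connect (del_rel e S) (rho' x) (rho' y).
Proof.
have del_symS := sym_connect_sym (del_rel_sym S e_sym).
move=> xy; have /and3P[exy xS' yS'] := xy.
case: (boolP ((x \in c) ==> (x \in X))) => [xok|]; last first.
  by rewrite negb_imply => /andP[xc xX]; apply/connect1/del_rel_rho'_cycle.
case: (boolP ((y \in c) ==> (y \in X))) => [yok|]; last first.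
  rewrite negb_imply => /andP[yc yX]; rewrite del_symS.
  by apply/connect1/del_rel_rho'_cycle; rewrite // del_rel_sym.
apply: connect_trans (connect_rho' xS' xok) _.
rewrite del_symS; apply: connect_trans (connect_rho' yS' yok) _.
apply: connect1; rewrite del_rel_sym // /del_rel /= exy.
by rewrite (notin_S_unrotated xS' xok) (notin_S_unrotated yS' yok).
Qed.

Lemma card_rotate_X : #|S :&: X| < #|rho @: S :&: X|.
Proof.
apply: proper_card; apply/properP; split.
  apply/subsetP => z; rewrite !inE => /andP[zS zX]; rewrite zX andbT.
  have zc : z \notin c by apply: contraTN zS => zc; apply: notin_S_cycle_X.
  by rewrite -[z](iter_fix shift (next_notin zc)); apply: imset_f.
have /andP[_ /exists_inP[y]] := hits_X_shift; rewrite !inE => /andP[yc yS] yX.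
exists (rho y); first by rewrite !inE yX imset_f.
by rewrite !inE yX andbT notin_S_cycle_X ?mem_iter_next.
Qed.

Lemma rotate_gains_X l : comps_bounded e S l ->
  exists S' : {set T}, [/\ #|S'| = #|S|, comps_bounded e S' l & #|S :&: X| < #|S' :&: X|].
Proof.
move=> bS; exists (rho @: S); split; last exact: card_rotate_X.
- exact/card_imset/can_inj/rhoK.
- exact: comps_bounded_imset rhoK rhoK' del_rel_rho' bS.
Qed.

End RotateAlongCycle.

Theorem lemma9 (T : finType) (e : rel T) (e_sym : symmetric e)
  (e_irr : irreflexive e) (X : {set T})
  (HX : forall v, v \notin X -> deg e v <= 2)
  (l p : nat) (hl : 0 < l) (hp : 0 < p) :
  (exists S : {set T}, #|S| <= p /\ comps_bounded e S l) ->
  exists S : {set T}, [/\ #|S| <= p, comps_bounded e S l &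
    forall c : seq T, is_cycle e c -> cset c :&: X != set0 ->
      cset c :&: S == set0 \/ cset c :&: X :&: S != set0].
Proof.
move=> [S0 [S0p S0b]].
pose admissible (S : {set T}) :=
  (#|S| <= p) && [forall (v | v \notin S), #|comp_of e S v| <= l].
have admS0 : admissible S0 by rewrite /admissible S0p; apply/comps_boundedP.
case: (arg_maxnP (fun S => #|S :&: X|) admS0) => S /andP[Sp /comps_boundedP Sb] Smax.
exists S; split=> // c [c3 Uc Cc] cX.
have [cS|cS] := eqVneq (cset c :&: S) set0; [by left | right].
apply/negP => /eqP cXS.
have [S' [S'S S'b S'X]] := rotate_gains_X e_sym HX c3 Uc Cc cS cX cXS Sb.
have /Smax : admissible S' by rewrite /admissible S'S Sp; apply/comps_boundedP.
by move/(leq_trans S'X); rewrite ltnn.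
Qed.
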